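(* In the setting of $I\ge 2$ matched pairs with fixed potential outcomes, observed outcomes $Y_{ij}=Y_{ij}(Z_{ij})$, and conditional on $\mathcal F,\mathcal Z$ the within-pair assignments $\widetilde Z_{i1}$ independent across pairs with $P(\widetilde Z_{i1}=1\mid\mathcal F,\mathcal Z)=p_{i1}\in(0,1)$ and $\widetilde Z_{i2}=1-\widetilde Z_{i1}$, consider the classic (generalized) Neyman estimator $$\widehat\lambda=\frac{\sum_{i=1}^{I}(\widetilde Z_{i1}-\widetilde Z_{i2})(Y_{i1}-Y_{i2})}{\sum_{i=1}^{I}(z_i^{**}-z_i^{*})}$$ and the variance estimator $$\overline{\overline V}=\frac{1}{\big(\sum_{i=1}^{I}(z_i^{**}-z_i^{*})\big)^2}\,\frac{I}{I-1}\sum_{i=1}^{I}\Big(\widetilde Z_{i1}\big((Y_{i1}-Y_{i2})-a\big)^2+\widetilde Z_{i2}\big((Y_{i2}-Y_{i1})-a\big)^2\Big),\qquad a=\widehat\lambda\,\frac{1}{I}\sum_{i=1}^{I}(z_i^{**}-z_i^{*}).$$ Then $\mathbb E[\overline{\overline V}\mid\mathcal F,\mathcal Z]\ge \mathrm{Var}[\widehat\lambda\mid\mathcal F,\mathcal Z]$.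
   Context: $Z_{ij}$ is the observed treatment dose of individual $j$ in matched pair $i$; $z_i^{*}=Z_{i1}\wedge Z_{i2}<z_i^{**}=Z_{i1}\vee Z_{i2}$; $\widetilde Z_{ij}=\mathbf 1\{Z_{ij}=z_i^{**}\}$. $\mathcal Z$ is the set of the $2^I$ dose assignments obtained by permuting the two doses within each pair, and $\mathcal F=\{(Y_{ij}(z_i^* ),Y_{ij}(z_i^{**}),\mathbf{x}_{ij})\}$ collects the potential outcomes under the two paired doses and the covariates. Expectation and variance are over the randomization distribution of the within-pair assignments only. *)

From HB Require Import structures.
From mathcomp Require Import all_boot all_order all_algebra.
Set Implicit Arguments. Unset Strict Implicit. Unset Printing Implicit Defensive.
Import Order.TTheory GRing.Theory Num.Theory.
Local Open Scope ring_scope.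

Section PairedDesign.
Variables (R : realFieldType) (I : nat).

(* A within-pair assignment: omega i = true  iff  Ztilde_{i1} = 1
   (individual 1 of pair i receives the larger dose z_i^** ).
   The set of all such omega is in bijection with the 2^I dose assignments of \mathcal Z. *)
Definition assign := {ffun 'I_I -> bool}.

Definition prob (p : 'I_I -> R) (w : assign) : R :=
  \prod_(i < I) (if w i then p i else 1 - p i).

Definition Ex (p : 'I_I -> R) (X : assign -> R) : R :=
  \sum_(w : assign) prob p w * X w.

Definition Var (p : 'I_I -> R) (X : assign -> R) : R :=
  Ex p (fun w => (X w - Ex p X) ^+ 2).

Variables (zlo zhi : 'I_I -> R) (Y : 'I_I -> 'I_2 -> R -> R).
(* zlo i = z_i^*, zhi i = z_i^**, Y i j z = potential outcome Y_{ij}(z);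
   individual index j : 'I_2, with ord0 = individual 1. *)

Definition Zdose (w : assign) (i : 'I_I) (j : 'I_2) : R :=
  if w i == (j == ord0) then zhi i else zlo i.

Definition Ztil (w : assign) (i : 'I_I) (j : 'I_2) : R :=
  if Zdose w i j == zhi i then 1 else 0.

Definition Yobs (w : assign) (i : 'I_I) (j : 'I_2) : R := Y i j (Zdose w i j).

Definition dsum : R := \sum_(i < I) (zhi i - zlo i).

Definition lambda_hat (w : assign) : R :=
  (\sum_(i < I) (Ztil w i ord0 - Ztil w i ord_max) * (Yobs w i ord0 - Yobs w i ord_max))
  / dsum.

Definition Vbb (w : assign) : R :=
  let a := lambda_hat w * (I%:R^-1 * dsum) in
  (dsum ^+ 2)^-1 * (I%:R / (I - 1)%:R) *
  \sum_(i < I) (Ztil w i ord0 * ((Yobs w i ord0 - Yobs w i ord_max) - a) ^+ 2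
              + Ztil w i ord_max * ((Yobs w i ord_max - Yobs w i ord0) - a) ^+ 2).

End PairedDesign.

From HB Require Import structures.
From mathcomp Require Import all_boot all_order all_algebra.
From mathcomp Require Import ring.
Import Order.TTheory GRing.Theory Num.Theory.
Set Implicit Arguments. Unset Strict Implicit. Unset Printing Implicit Defensive.
Local Open Scope ring_scope.

(* In each pair the Neyman summand only depends on the coin of that pair: it is
   a contrast [t_i] equal to one of two fixed values, and the estimator is
   [sum_i t_i / S] with [S = dsum] the total dose gap.  Independence across pairs gives
   [Var lambda_hat = sum_i Var t_i / S^2], while the expected sum of squared
   deviations of the [t_i] from their mean is
   [(1 - 1/I) sum_i Var t_i + sum_i (E t_i - mean_j E t_j)^2].
   Hence [E Vbb] exceeds [Var lambda_hat] by the nonnegative between-pair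
   dispersion of the expected contrasts. *)

Lemma sum_sqr_dev (F : fieldType) (n : nat) (u : 'I_n -> F) : n%:R != 0 :> F ->
  \sum_i (u i - (\sum_j u j) / n%:R) ^+ 2
  = \sum_i u i ^+ 2 - n%:R^-1 * (\sum_i u i) ^+ 2.
Proof.
move=> n0; set s := \sum_j u j.
rewrite (eq_bigr (fun i => u i ^+ 2 + (- (2 * s / n%:R) * u i + (s / n%:R) ^+ 2)));
  last by move=> i _; ring.
by rewrite !big_split /= -mulr_sumr sumr_const card_ord -/s -mulr_natr; field.
Qed.

Section Randomization.
Variables (R : realFieldType) (I : nat) (p : 'I_I -> R).

Definition pair_prob (i : 'I_I) (b : bool) : R := if b then p i else 1 - p i.

Definition pair_Ex (i : 'I_I) (h : bool -> R) : R := \sum_b pair_prob i b * h b.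

Lemma pair_Ex1 i : pair_Ex i (fun=> 1) = 1.
Proof. by rewrite /pair_Ex big_bool /= !mulr1 addrC subrK. Qed.

Lemma eq_Ex (X X' : assign I -> R) : X =1 X' -> Ex p X = Ex p X'.
Proof. by move=> eqX; apply: eq_bigr => w _; rewrite eqX. Qed.

Lemma ExD X X' : Ex p (fun w => X w + X' w) = Ex p X + Ex p X'.
Proof. by rewrite /Ex -big_split; apply: eq_bigr => w _; rewrite mulrDr. Qed.

Lemma ExB X X' : Ex p (fun w => X w - X' w) = Ex p X - Ex p X'.
Proof. by rewrite /Ex -sumrB; apply: eq_bigr => w _; rewrite mulrBr. Qed.

Lemma ExZ c X : Ex p (fun w => c * X w) = c * Ex p X.
Proof. by rewrite /Ex mulr_sumr; apply: eq_bigr => w _; rewrite mulrCA. Qed.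

Lemma Ex_sum (F : 'I_I -> assign I -> R) :
  Ex p (fun w => \sum_i F i w) = \sum_i Ex p (F i).
Proof. by rewrite /Ex; under eq_bigr do rewrite mulr_sumr; exact: exchange_big. Qed.

Lemma Ex_prod (G : 'I_I -> bool -> R) :
  Ex p (fun w => \prod_i G i (w i)) = \prod_i pair_Ex i (G i).
Proof.
rewrite /Ex /prob /pair_Ex bigA_distr_bigA.
by apply: eq_bigr => w _; rewrite big_split.
Qed.

Lemma Ex_cst c : Ex p (fun=> c) = c.
Proof.
rewrite (@eq_Ex _ (fun w => c * \prod_(i < I) 1)); last first.
  by move=> w; rewrite big1 ?mulr1.
by rewrite ExZ (Ex_prod (fun _ _ => 1)) big1 ?mulr1 // => i _; exact: pair_Ex1.
Qed.

Lemma Ex_coord i (f : bool -> R) : Ex p (fun w => f (w i)) = pair_Ex i f.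
Proof.
pose G k := if k == i then f else fun=> 1.
have eqG w : f (w i) = \prod_k G k (w k).
  by rewrite (bigD1 i) //= /G eqxx big1 ?mulr1 // => k /negbTE ->.
rewrite (eq_Ex eqG) Ex_prod (bigD1 i) //= /G eqxx big1 ?mulr1 //.
by move=> k /negbTE ->; exact: pair_Ex1.
Qed.

Lemma Ex_coord2 i j (f g : bool -> R) : i != j ->
  Ex p (fun w => f (w i) * g (w j)) = pair_Ex i f * pair_Ex j g.
Proof.
move=> neq_ij; have neq_ji : (j == i) = false by rewrite eq_sym (negbTE neq_ij).
pose G k := if k == i then f else if k == j then g else fun=> 1.
have eqG w : f (w i) * g (w j) = \prod_k G k (w k).
  rewrite (bigD1 i) //= (bigD1 j) /=; last by rewrite eq_sym.
  rewrite /G eqxx neq_ji eqxx big1 ?mulr1 //.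
  by move=> k /andP[/negbTE -> /negbTE ->].
rewrite (eq_Ex eqG) Ex_prod (bigD1 i) //= (bigD1 j) /=; last by rewrite eq_sym.
rewrite /G eqxx neq_ji eqxx big1 ?mulr1 //.
by move=> k /andP[/negbTE -> /negbTE ->]; exact: pair_Ex1.
Qed.

Lemma eq_Var (X X' : assign I -> R) : X =1 X' -> Var p X = Var p X'.
Proof. by move=> eqX; rewrite /Var (eq_Ex eqX); apply: eq_Ex => w; rewrite eqX. Qed.

Lemma VarE X : Var p X = Ex p (fun w => X w ^+ 2) - Ex p X ^+ 2.
Proof.
rewrite /Var (@eq_Ex _ (fun w => X w ^+ 2 + (- (2 * Ex p X) * X w + Ex p X ^+ 2))).
  by rewrite !ExD ExZ Ex_cst; ring.
by move=> w; ring.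
Qed.

Lemma VarZ c X : Var p (fun w => c * X w) = c ^+ 2 * Var p X.
Proof.
rewrite /Var ExZ -[RHS]ExZ; apply: eq_Ex => w /=; ring.
Qed.

Section SumOfCoordinates.
Variable t : 'I_I -> bool -> R.

Definition pair_var (i : 'I_I) : R :=
  pair_Ex i (fun b => t i b ^+ 2) - pair_Ex i (t i) ^+ 2.

Lemma Ex_sum_coord : Ex p (fun w => \sum_i t i (w i)) = \sum_i pair_Ex i (t i).
Proof. by rewrite Ex_sum; apply: eq_bigr => i _; rewrite Ex_coord. Qed.

Lemma Ex_sqr_sum_coord :
  Ex p (fun w => (\sum_i t i (w i)) ^+ 2)
  = (\sum_i pair_Ex i (t i)) ^+ 2 + \sum_i pair_var i.
Proof.
rewrite (@eq_Ex _ (fun w => \sum_i \sum_j t i (w i) * t j (w j))); last first.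
  by move=> w; rewrite expr2 mulr_suml; apply: eq_bigr => i _; rewrite mulr_sumr.
rewrite Ex_sum expr2 mulr_suml -big_split; apply: eq_bigr => i _ /=.
rewrite Ex_sum mulr_sumr (bigD1 i) //= [in RHS](bigD1 i) //=.
rewrite (Ex_coord i (fun b => t i b * t i b)).
rewrite (eq_bigr (fun j => pair_Ex i (t i) * pair_Ex j (t j))); last first.
  by move=> j neq_ji; rewrite (Ex_coord2 (t i) (t j)) // eq_sym.
by rewrite /pair_var; under [pair_Ex i (fun b => _ ^+ 2)]eq_bigr do rewrite expr2; ring.
Qed.

Lemma Var_sum_coord : Var p (fun w => \sum_i t i (w i)) = \sum_i pair_var i.
Proof. by rewrite VarE Ex_sqr_sum_coord Ex_sum_coord addrC addKr. Qed.

Lemma Ex_sum_sqr_dev : I%:R != 0 :> R ->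
  Ex p (fun w => \sum_i (t i (w i) - (\sum_j t j (w j)) / I%:R) ^+ 2)
  = (1 - I%:R^-1) * \sum_i pair_var i
    + \sum_i (pair_Ex i (t i) - (\sum_j pair_Ex j (t j)) / I%:R) ^+ 2.
Proof.
move=> I0; rewrite (eq_Ex (fun w => sum_sqr_dev (fun i => t i (w i)) I0)).
rewrite ExB ExZ Ex_sqr_sum_coord sum_sqr_dev // Ex_sum.
under eq_bigr do rewrite (Ex_coord _ (fun b => t _ b ^+ 2)).
rewrite /pair_var sumrB; ring.
Qed.

End SumOfCoordinates.
End Randomization.

Section PairedDesign.
Variables (R : realFieldType) (I : nat) (zlo zhi : 'I_I -> R)
  (Y : 'I_I -> 'I_2 -> R -> R).
Hypothesis lt_zlo_zhi : forall i, zlo i < zhi i.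

Definition contrast (i : 'I_I) (b : bool) : R :=
  if b then Y i ord0 (zhi i) - Y i ord_max (zlo i)
  else Y i ord_max (zhi i) - Y i ord0 (zlo i).

Let zlo_eq_zhiF i : (zlo i == zhi i) = false.
Proof. by rewrite lt_eqF. Qed.

Lemma Neyman_summandE w i :
  (Ztil zlo zhi w i ord0 - Ztil zlo zhi w i ord_max)
  * (Yobs zlo zhi Y w i ord0 - Yobs zlo zhi Y w i ord_max) = contrast i (w i).
Proof.
rewrite /Ztil /Yobs /Zdose /contrast; case: (w i) => /=; rewrite ?eqxx ?zlo_eq_zhiF /=.
  by rewrite subr0 mul1r.
by rewrite sub0r mulN1r opprB.
Qed.

Lemma Vbb_summandE w i a :
  Ztil zlo zhi w i ord0 * (Yobs zlo zhi Y w i ord0 - Yobs zlo zhi Y w i ord_max - a) ^+ 2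
  + Ztil zlo zhi w i ord_max * (Yobs zlo zhi Y w i ord_max - Yobs zlo zhi Y w i ord0 - a) ^+ 2
  = (contrast i (w i) - a) ^+ 2.
Proof.
rewrite /Ztil /Yobs /Zdose /contrast; case: (w i) => /=; rewrite ?eqxx ?zlo_eq_zhiF /=.
  by rewrite mul1r mul0r addr0.
by rewrite mul1r mul0r add0r.
Qed.

Lemma dsum_gt0 : (0 < I)%N -> 0 < dsum zlo zhi.
Proof.
move=> I_gt0; rewrite /dsum (bigD1 (Ordinal I_gt0)) //=.
rewrite ltr_pwDl ?subr_gt0 //.
by apply: sumr_ge0 => i _; rewrite subr_ge0 ltW.
Qed.

Lemma lambda_hatE w :
  lambda_hat zlo zhi Y w = (dsum zlo zhi)^-1 * \sum_i contrast i (w i).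
Proof.
by rewrite /lambda_hat mulrC; congr (_ * _); apply: eq_bigr => i _; apply: Neyman_summandE.
Qed.

Lemma VbbE w : (0 < I)%N ->
  Vbb zlo zhi Y w = ((dsum zlo zhi) ^+ 2)^-1 * (I%:R / (I - 1)%:R)
    * \sum_i (contrast i (w i) - (\sum_j contrast j (w j)) / I%:R) ^+ 2.
Proof.
move=> I_gt0; have S0 : dsum zlo zhi != 0 by rewrite gt_eqF ?dsum_gt0.
rewrite /Vbb /=; congr (_ * _); apply: eq_bigr => i _.
rewrite Vbb_summandE lambda_hatE; congr ((_ - _) ^+ 2); field.
by rewrite S0 pnatr_eq0 -lt0n I_gt0.
Qed.

Variable p : 'I_I -> R.

Lemma Var_lambda_hat :
  Var p (lambda_hat zlo zhi Y) = ((dsum zlo zhi) ^+ 2)^-1 * \sum_i pair_var p contrast i.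
Proof.
by rewrite (eq_Var _ lambda_hatE) VarZ Var_sum_coord exprVn.
Qed.

Lemma Ex_VbbE : (1 < I)%N ->
  Ex p (Vbb zlo zhi Y) = Var p (lambda_hat zlo zhi Y)
    + ((dsum zlo zhi) ^+ 2)^-1 * (I%:R / (I - 1)%:R)
      * \sum_i (pair_Ex p i (contrast i) - (\sum_j pair_Ex p j (contrast j)) / I%:R) ^+ 2.
Proof.
move=> I_gt1; have I_gt0 := ltnW I_gt1.
have I0 : I%:R != 0 :> R by rewrite pnatr_eq0 -lt0n.
have I10 : (I - 1)%:R != 0 :> R by rewrite pnatr_eq0 subn_eq0 -ltnNge.
rewrite (eq_Ex _ (VbbE ^~ I_gt0)) ExZ Ex_sum_sqr_dev // Var_lambda_hat.
rewrite natrB // in I10 *; field.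
by rewrite I0 I10 gt_eqF ?dsum_gt0.
Qed.

End PairedDesign.

Theorem lemma1 (R : realFieldType) (I : nat) (hI : (2 <= I)%N)
    (zlo zhi : 'I_I -> R) (hz : forall i, zlo i < zhi i)
    (Y : 'I_I -> 'I_2 -> R -> R)
    (p : 'I_I -> R) (hp : forall i, 0 < p i < 1) :
  Var p (lambda_hat zlo zhi Y) <= Ex p (Vbb zlo zhi Y).
Proof.
rewrite Ex_VbbE // lerDl; apply: mulr_ge0; last by apply: sumr_ge0 => i _; apply: sqr_ge0.
by rewrite mulr_ge0 ?invr_ge0 ?sqr_ge0 ?divr_ge0.
Qed.
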